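(* Let $\epsilon\in(0,1]$, $\gamma>0$, $N\ge2$. For $x\in V$ let $\vec p_x=(\hat p((x,0),(L,0)),\hat p((x,0),(L,1)),\hat p((x,0),(R,0)),\hat p((x,0),(R,1)))^T$ and $\vec q_x=(\hat p((x,1),(L,0)),\hat p((x,1),(L,1)),\hat p((x,1),(R,0)),\hat p((x,1),(R,1)))^T$. Then the matrix $M_\epsilon$ is invertible and, for all $x\in V$, $$\vec p_x=\vec c_1x+\vec c_2+\epsilon(\vec c_3\alpha_1^x+\vec c_4\alpha_2^x),\qquad \vec q_x=\vec c_1x+\vec c_2-(\vec c_3\alpha_1^x+\vec c_4\alpha_2^x).$$
   Context: $V=\{1,\dots,N\}$. Absorption probabilities: consider the continuous-time Markov chain on $(V\times\{0,1\})\cup\{(L,0),(L,1),(R,0),(R,1)\}$ in which the last four states are absorbing, and from $(x,0)$ it jumps to $(x\pm1,0)$ at rate $1$ each (whenever $x\pm1\in V$), from $(x,1)$ to $(x\pm1,1)$ at rate $\epsilon$ each (whenever $x\pm1\in V$), from $(x,i)$ to $(x,1-i)$ at rate $\gamma$, from $(1,i)$ to $(L,i)$ at rate $1$, and from $(N,i)$ to $(R,i)$ at rate $1$. $\hat p((x,i),(\beta,j))$ denotes the probability that this chain started at $(x,i)$ is eventually absorbed at $(\beta,j)$. Let $\alpha_1<\alpha_2$ be the two roots of $\epsilon\alpha^2-(\gamma(1+\epsilon)+2\epsilon)\alpha+\epsilon=0$, i.e. $\alpha_{1,2}=1+\frac\gamma2(1+\frac1\epsilon)\mp\sqrt{[1+\frac\gamma2(1+\frac1\epsilon)]^2-1}$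 (so $\alpha_1\alpha_2=1$). Let $$M_\epsilon=\begin{pmatrix}0&1&\epsilon&\epsilon\\ 1-\epsilon&1&(\epsilon-1)\alpha_1-\epsilon&(\epsilon-1)\alpha_2-\epsilon\\ N+1&1&\epsilon\alpha_1^{N+1}&\epsilon\alpha_2^{N+1}\\ N+\epsilon&1&-\alpha_1^N(\epsilon\alpha_1+1-\epsilon)&-\alpha_2^N(\epsilon\alpha_2+1-\epsilon)\end{pmatrix},$$ and for $k\in\{1,2,3,4\}$ let $\vec c_k=(M_\epsilon^{-1})^T\vec e_k\in\mathbb R^4$ (the transpose of the $k$-th row of $M_\epsilon^{-1}$), $\vec e_k$ the standard basis vectors. *)

From HB Require Import structures.
From mathcomp Require Import all_boot all_order all_algebra.
From mathcomp Require Import all_classical all_reals all_analysis.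
Set Implicit Arguments. Unset Strict Implicit. Unset Printing Implicit Defensive.
Import Order.TTheory GRing.Theory Num.Theory numFieldNormedType.Exports.
Local Open Scope ring_scope.

(* State space of the chain.
   inl (i, b) : transient state (x, b) with x = i + 1 in V = {1..N}, level b
                (false = 0, true = 1).
   inr (side, b) : absorbing state (L, b) if side = false, (R, b) if side = true. *)
Definition state (N : nat) : finType := ('I_N * bool + bool * bool)%type.

Definition Lst (N : nat) (b : bool) : state N := inr (false, b).
Definition Rst (N : nat) (b : bool) : state N := inr (true, b).
Definition Vst (N : nat) (i : 'I_N) (b : bool) : state N := inl (i, b).

Section Chain.
Variables (R : realType) (N : nat) (eps gamma : R).

Definition rate (s t : state N) : R :=
  match s, t with
  | inl (i, b), inl (j, c) =>
      if b == c then
        (if ((j : nat) == i.+1) || ((i : nat) == j.+1)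
         then (if b then eps else 1) else 0)
      else (if (i : nat) == j then gamma else 0)
  | inl (i, b), inr (side, c) =>
      if b == c then
        (if side then (if (i : nat) == N.-1 then 1 else 0)
         else (if (i : nat) == 0%N then 1 else 0))
      else 0
  | inr _, _ => 0
  end.

Definition absorbing (s : state N) : bool := if s is inr _ then true else false.

Definition jump (s t : state N) : R :=
  if absorbing s then (s == t)%:R
  else rate s t / \sum_(u : state N) rate s u.

Fixpoint stepn (n : nat) (s t : state N) : R :=
  match n with
  | 0 => (s == t)%:R
  | n'.+1 => \sum_(u : state N) jump s u * stepn n' u t
  end.

(* absorption probability: for an absorbing target a, the probability of
   having been absorbed at a by step n increases to the probability of
   eventual absorption at a. *)
Definition phat (s a : state N) : R := limn (fun n => stepn n s a).

End Chain.

Section Mat.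
Variables (R : realType) (N : nat) (eps gamma : R).

Definition alpha_b : R := 1 + gamma / 2 * (1 + eps^-1).
Definition alpha1 : R := alpha_b - Num.sqrt (alpha_b ^+ 2 - 1).
Definition alpha2 : R := alpha_b + Num.sqrt (alpha_b ^+ 2 - 1).

Definition Mrows : seq (seq R) :=
  [:: [:: 0; 1; eps; eps];
      [:: 1 - eps; 1; (eps - 1) * alpha1 - eps; (eps - 1) * alpha2 - eps];
      [:: N.+1%:R; 1; eps * alpha1 ^+ N.+1; eps * alpha2 ^+ N.+1];
      [:: N%:R + eps; 1; - (alpha1 ^+ N * (eps * alpha1 + 1 - eps));
                         - (alpha2 ^+ N * (eps * alpha2 + 1 - eps))]].

Definition Meps : 'M[R]_4 := \matrix_(i < 4, j < 4) nth 0 (nth [::] Mrows i) j.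

(* c_k = (M^-1)^T e_k, k = 1..4 (here k : 'I_4 is 0-based) : its j-th entry
   is (M^-1) k j. *)
Definition cvec (k : 'I_4) : 'cV[R]_4 := (invmx Meps)^T *m delta_mx k 0.

End Mat.

Definition target (N : nat) (j : 'I_4) : state N :=
  match nat_of_ord j with
  | 0 => Lst N false
  | 1 => Lst N true
  | 2 => Rst N false
  | _ => Rst N true
  end.

From HB Require Import structures.
From mathcomp Require Import all_boot all_order all_algebra.
From mathcomp Require Import all_classical all_reals all_analysis.
From mathcomp Require Import ring lra zify.
Import Order.TTheory GRing.Theory Num.Theory numFieldNormedType.Exports.
Local Open Scope ring_scope.
Set Implicit Arguments. Unset Strict Implicit. Unset Printing Implicit Defensive.

(* For c : 'I_4 -> R let F_c(b, x) = c0 x + c1 + w_b (c2 a1^x + c3 a2^x) with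
   w_0 = eps, w_1 = -1.  The proof has three ingredients.
   1. Markov chains: for a stochastic kernel with absorbing states admitting a
      nonnegative Lyapunov function that drops by c > 0 in expectation at every
      transient state, the survival probability after n steps is O(1/n); hence
      every harmonic function is the limit of its expectation over the states
      absorbed by time n (section Absorption).
   2. The chain: a level profile satisfying the interior recurrence, extended
      by suitable boundary values at (L, b) and (R, b), is harmonic for the
      jump chain, and x (N + 1 - x) is a Lyapunov function (section Chain).
   3. Algebra: a1, a2 are the roots of the characteristic polynomial, so every
      F_c solves the interior recurrence, and the rows of M_eps compute the
      boundary values of the resulting harmonic "candidate" (section Roots).
   If M_eps c = 0 the candidate vanishes on the boundary, hence everywhere,
   and its values at x = 1, 2 force c = 0: M_eps is invertible.  For c the
   j-th column of M_eps^-1 the boundary values are the indicator of the j-th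
   target, so the candidate is the absorption probability at that target. *)

Lemma sum_delta (R : pzRingType) (T : finType) (s : T) (h : T -> R) :
  \sum_u (s == u)%:R * h u = h s.
Proof.
rewrite (bigD1 s) //= eqxx mul1r big1 ?addr0 // => u hu.
by rewrite eq_sym (negbTE hu) mul0r.
Qed.

Section Absorption.
Variables (R : realType) (T : finType) (P : T -> T -> R) (absorb : pred T).
Hypothesis P_ge0 : forall s t, 0 <= P s t.
Hypothesis P_absorb : forall s t, absorb s -> P s t = (s == t)%:R.

Fixpoint iterP (n : nat) (s t : T) : R :=
  if n is n'.+1 then \sum_u P s u * iterP n' u t else (s == t)%:R.

Definition expect (n : nat) (s : T) (h : T -> R) : R := \sum_u iterP n s u * h u.

Definition harmonic_fun (f : T -> R) : Prop := forall s, \sum_u P s u * f u = f s.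

Definition alive (u : T) : R := (~~ absorb u)%:R.

Definition survival (n : nat) (s : T) : R := expect n s alive.

Lemma iterP_ge0 n s t : 0 <= iterP n s t.
Proof.
elim: n s => [|n IH] s /=; first exact: ler0n.
by apply: sumr_ge0 => u _; apply: mulr_ge0.
Qed.

Lemma expect0 s h : expect 0 s h = h s.
Proof. exact: sum_delta. Qed.

Lemma expectS n s h : expect n.+1 s h = \sum_u P s u * expect n u h.
Proof.
rewrite /expect /=; under eq_bigr do rewrite mulr_suml.
rewrite exchange_big; apply: eq_bigr => u _; rewrite mulr_sumr.
by apply: eq_bigr => t _; rewrite mulrA.
Qed.

Lemma sum_absorb s h : absorb s -> \sum_u P s u * h u = h s.
Proof. by move=> hs; under eq_bigr do rewrite P_absorb //; rewrite sum_delta. Qed.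

Lemma expect_harmonic f : harmonic_fun f -> forall n s, expect n s f = f s.
Proof.
move=> Hf; elim=> [|n IH] s; first exact: expect0.
by rewrite expectS -[RHS]Hf; apply: eq_bigr => u _; rewrite IH.
Qed.

Lemma expect_superharmonic h : (forall s, \sum_u P s u * h u <= h s) ->
  forall n s, expect n.+1 s h <= expect n s h.
Proof.
move=> Hh; elim=> [|n IH] s.
  by rewrite expectS expect0; under eq_bigr do rewrite expect0.
by rewrite expectS [leRHS]expectS; apply: ler_sum => u _; apply: ler_wpM2l.
Qed.

Hypothesis P_sum1 : forall s, \sum_t P s t = 1.

(* Being alive is superharmonic, so survival is nonincreasing in time. *)
Lemma survival_decr n s : survival n.+1 s <= survival n s.
Proof.
apply: expect_superharmonic => {}s; have [hs|hs] := boolP (absorb s).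
  by rewrite sum_absorb.
rewrite /alive hs -[leRHS](P_sum1 s); apply: ler_sum => u _.
by apply: ler_piMr => //; rewrite lern1 leq_b1.
Qed.

Lemma survival_anti k n s : (k <= n)%N -> survival n s <= survival k s.
Proof.
elim: n => [|n IH]; first by rewrite leqn0 => /eqP->.
rewrite leq_eqVlt => /orP[/eqP->//|]; rewrite ltnS => hk.
exact: le_trans (survival_decr n s) (IH hk).
Qed.

(* A Lyapunov function [g], decreasing by [c] in expectation at every
   transient state, bounds the expected absorption time. *)
Variables (g : T -> R) (c : R).
Hypothesis g_ge0 : forall u, 0 <= g u.
Hypothesis c_gt0 : 0 < c.
Hypothesis g_drift : forall s, ~~ absorb s -> \sum_u P s u * g u <= g s - c.

Lemma lyapunov_sum n s : expect n s g + c * \sum_(0 <= k < n) survival k s <= g s.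
Proof.
have drift u : \sum_v P u v * g v + c * alive u <= g u.
  rewrite /alive; have [hu|hu] := boolP (absorb u).
    by rewrite sum_absorb // mulr0 addr0.
  by rewrite mulr1 -lerBrDr; apply: g_drift.
elim: n s => [|n IH] s; first by rewrite expect0 big_geq // mulr0 addr0.
rewrite big_nat_recl // expectS mulrDr addrCA addrC.
under [\sum_(0 <= i < n) _]eq_bigr do rewrite /survival expectS.
rewrite exchange_big mulr_sumr -big_split /=.
apply: le_trans (drift s); rewrite /survival expect0 lerD2r; apply: ler_sum => u _.
rewrite -mulr_sumr mulrCA -mulrDr; apply: ler_wpM2l => //.
Qed.

(* Survival is nonincreasing, so (n + 1) survival n s <= g s / c. *)
Lemma survival_bound n s : survival n s <= g s / c * harmonic n.
Proof.
have avg : survival n s *+ n.+1 <= \sum_(0 <= k < n.+1) survival k s.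
  rewrite -[n.+1 in X in X <= _]subn0 -sumr_const_nat.
  by apply: ler_sum_nat => k /andP[_ hk]; apply: survival_anti; rewrite -ltnS.
have expect_ge0 : 0 <= expect n.+1 s g.
  by apply: sumr_ge0 => u _; apply: mulr_ge0 => //; apply: iterP_ge0.
rewrite /harmonic /= -mulrA -invfM ler_pdivlMr ?mulr_gt0 ?ltr0n //.
rewrite mulrA mulr_natr [_ * c]mulrC.
apply: le_trans (lyapunov_sum n.+1 s); rewrite -[leLHS]add0r.
by apply: lerD => //; rewrite -mulrnAr; apply: ler_wpM2l => //; apply: ltW.
Qed.

Lemma absorbed_expect_cvg f s : harmonic_fun f ->
  (\sum_(u | absorb u) iterP n s u * f u @[n --> \oo] --> f s)%classic.
Proof.
move=> Hf; set K := \sum_v `|f v|; set C := K * (g s / c).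
have HK u : `|f u| <= K by rewrite /K (bigD1 u) //= lerDl sumr_ge0.
have K_ge0 : 0 <= K by apply: le_trans (HK s).
have err n : `|f s - \sum_(u | absorb u) iterP n s u * f u| <= C * harmonic n.
  rewrite -{1}(expect_harmonic Hf n s) /expect (bigID absorb) /= addrAC subrr add0r.
  apply: le_trans (ler_norm_sum _ _ _) _; rewrite /C -mulrA.
  apply: le_trans (ler_wpM2l K_ge0 (survival_bound n s)).
  rewrite /survival /expect mulr_sumr [leRHS](bigID absorb) /=.
  rewrite [X in _ <= X + _]big1 ?add0r => [|u hu]; last by rewrite /alive hu !mulr0.
  apply: ler_sum => u hu; rewrite /alive hu mulr1 normrM ger0_norm ?iterP_ge0 //.
  by rewrite [leRHS]mulrC; apply: ler_wpM2l (HK u); apply: iterP_ge0.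
have cvg_pm (e : R) : (f s + e * (C * harmonic n) @[n --> \oo] --> f s)%classic.
  have H : (f s + e * (C * harmonic n) @[n --> \oo] --> f s + e * (C * 0))%classic.
    apply: cvgD; first exact: cvg_cst.
    by apply: cvgM; [exact: cvg_cst | apply: cvgM; [exact: cvg_cst | exact: cvg_harmonic]].
  by rewrite !mulr0 addr0 in H.
apply: (squeeze_cvgr _ (cvg_pm (-1)) (cvg_pm 1)); apply: nearW => n.
by have := err n; rewrite ler_norml => /andP[h1 h2]; apply/andP; split; lra.
Qed.

End Absorption.

Lemma sum_if_eq (R : pzRingType) (N k : nat) (G : nat -> R) :
  \sum_(j < N) (if (j : nat) == k then G j else 0) = if (k < N)%N then G k else 0.
Proof.
elim: N => [|N IH]; first by rewrite big_ord0.
rewrite big_ord_recr /= IH.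
case: (ltngtP k N) => [hk|hk|->].
- by rewrite addr0 ltnS ltnW.
- by rewrite addr0 ltnS leqNgt hk.
- by rewrite add0r ltnSn.
Qed.

Lemma sum_if_eqS (R : pzRingType) (N k : nat) (G : nat -> R) : (k < N)%N ->
  \sum_(j < N) (if k == (j : nat).+1 then G j else 0) = if (0 < k)%N then G k.-1 else 0.
Proof.
case: k => [|k] hk; first by rewrite big1.
by under eq_bigr do rewrite eqSS eq_sym; rewrite sum_if_eq /= (ltn_trans _ hk).
Qed.

Lemma pair_sum (R : pzRingType) (I J : finType) (G : I * J -> R) :
  \sum_(p : I * J) G p = \sum_(i : I) \sum_(j : J) G (i, j).
Proof. by rewrite pair_big; apply: eq_bigr => -[i j]. Qed.

Section Chain.
Variables (R : realType) (N : nat) (eps gamma : R).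
Hypotheses (eps_gt0 : 0 < eps) (gamma_gt0 : 0 < gamma).

Definition lrate (b : bool) : R := if b then eps else 1.

Definition lift (F : bool -> nat -> R) (BL BR : bool -> R) (u : state N) : R :=
  match u with
  | inl (i, b) => F b i.+1
  | inr (false, b) => BL b
  | inr (true, b) => BR b
  end.

Lemma rate_transient (F : bool -> nat -> R) (i j : 'I_N) (b : bool) :
  \sum_(c : bool) rate eps gamma (inl (i, b)) (inl (j, c)) * F c (j : nat).+1 =
  (if (j : nat) == i.+1 then lrate b * F b j.+1 else 0)
  + (if (i : nat) == j.+1 then lrate b * F b j.+1 else 0)
  + (if (j : nat) == i then gamma * F (~~ b) j.+1 else 0).
Proof.
rewrite big_bool; case: b => /=;
repeat (case: ifP => /=; move=> ?); rewrite ?mul0r ?add0r ?addr0 //; lia.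
Qed.

Lemma rate_absorbing (F : bool -> nat -> R) (BL BR : bool -> R) (i : 'I_N) (b : bool) :
  \sum_(p : bool * bool) rate eps gamma (inl (i, b)) (inr p) * lift F BL BR (inr p) =
  (if (i : nat) == 0%N then BL b else 0) + (if (i : nat) == N.-1 then BR b else 0).
Proof.
rewrite pair_sum !big_bool /=; case: b => /=;
repeat (case: ifP => /=; move=> ?); rewrite ?mul0r ?add0r ?addr0 ?mul1r //; try lia.
all: by rewrite addrC.
Qed.

Lemma rate_lift (F : bool -> nat -> R) (BL BR : bool -> R) (i : 'I_N) (b : bool) :
  \sum_u rate eps gamma (inl (i, b)) u * lift F BL BR u =
  (if (0 < i)%N then lrate b * F b i else BL b)
  + (if (i.+1 < N)%N then lrate b * F b i.+2 else BR b)
  + gamma * F (~~ b) i.+1.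
Proof.
rewrite big_sumType rate_absorbing pair_sum /=.
under eq_bigr do rewrite rate_transient.
rewrite !big_split /= (sum_if_eq _ _ (fun j => lrate b * F b j.+1)).
rewrite (sum_if_eqS (fun j => lrate b * F b j.+1) (ltn_ord i)).
rewrite (sum_if_eq _ _ (fun j => gamma * F (~~ b) j.+1)) ltn_ord.
have hi := ltn_ord i.
repeat (case: ifP => /=; move=> ?); rewrite ?mul0r ?add0r ?addr0 ?mul1r //; try lia.
all: rewrite ?prednK //; ring.
Qed.

Lemma rate_total (i : 'I_N) (b : bool) :
  \sum_u rate eps gamma (inl (i, b)) u =
  (if (0 < i)%N then lrate b else 1) + (if (i.+1 < N)%N then lrate b else 1) + gamma.
Proof.
have := rate_lift (fun _ _ => 1) (fun _ => 1) (fun _ => 1) i b.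
rewrite !mulr1 => <-; apply: eq_bigr => u _.
by case: u => [[? ?]|[[] ?]]; rewrite mulr1.
Qed.

Lemma lrate_gt0 (b : bool) : 0 < lrate b.
Proof. by case: b => //=; exact: ltr01. Qed.

Lemma rate_total_gt0 (i : 'I_N) (b : bool) : 0 < \sum_u rate eps gamma (inl (i, b)) u.
Proof.
rewrite rate_total; apply: ltr_wpDl => //.
by apply: addr_ge0; case: ifP => _; rewrite ?ler01 ?ltW ?lrate_gt0.
Qed.

Lemma rate_ge0 (s t : state N) : 0 <= rate eps gamma s t.
Proof.
case: s => [[i b]|[side b]] //.
by case: t => [[j c]|[side c]] /=; repeat case: ifP => _; rewrite ?ler01 //; exact: ltW.
Qed.

Lemma jump_absorbing (s t : state N) : absorbing s -> jump eps gamma s t = (s == t)%:R.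
Proof. by rewrite /jump => ->. Qed.

Lemma jump_average (i : 'I_N) (b : bool) (h : state N -> R) :
  \sum_u jump eps gamma (inl (i, b)) u * h u =
  (\sum_u rate eps gamma (inl (i, b)) u * h u) / \sum_u rate eps gamma (inl (i, b)) u.
Proof. by rewrite mulr_suml; apply: eq_bigr => u _; rewrite /jump /= mulrAC. Qed.

Lemma jump_ge0 (s t : state N) : 0 <= jump eps gamma s t.
Proof.
case: s => [[i b]|p]; last by rewrite jump_absorbing.
by apply: divr_ge0; [exact: rate_ge0 | exact/ltW/rate_total_gt0].
Qed.

Lemma jump_sum1 (s : state N) : \sum_t jump eps gamma s t = 1.
Proof.
case: s => [[i b]|p]; last first.
  under eq_bigr do rewrite jump_absorbing // -[_%:R]mulr1.
  exact: (sum_delta _ (fun _ => 1)).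
have := jump_average i b (fun _ => 1); under eq_bigr do rewrite mulr1.
by move=> ->; under eq_bigr do rewrite mulr1; rewrite divff // gt_eqF ?rate_total_gt0.
Qed.

(* Boundary values making the lift of a level profile harmonic at x = 1 and
   x = N, by extrapolating the profile to x = 0 and x = N + 1. *)
Definition bvalL (F : bool -> nat -> R) (b : bool) : R :=
  lrate b * F b 0%N + (1 - lrate b) * F b 1%N.
Definition bvalR (F : bool -> nat -> R) (b : bool) : R :=
  lrate b * F b N.+1 + (1 - lrate b) * F b N.

(* the harmonicity equation at an interior point x = y + 1 *)
Definition interior_eq (F : bool -> nat -> R) : Prop :=
  forall b y, gamma * F (~~ b) y.+1 =
    (2 * lrate b + gamma) * F b y.+1 - lrate b * (F b y + F b y.+2).

(* A profile solving the interior recurrence lifts to a harmonic function;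
   at x = 1 and x = N the boundary values play the role of F at 0 and N + 1. *)
Lemma lift_harmonic (F : bool -> nat -> R) : interior_eq F ->
  harmonic_fun (jump eps gamma) (lift F (bvalL F) (bvalR F)).
Proof.
move=> hI [[i b]|p]; last by under eq_bigr do rewrite jump_absorbing //; rewrite sum_delta.
rewrite jump_average rate_lift; apply: (canLR (mulfK (lt0r_neq0 (rate_total_gt0 i b)))).
rewrite rate_total hI /= /bvalL /bvalR.
have hi := ltn_ord i.
have [h0|h0] := boolP (0 < i)%N; have [h1|h1] := boolP (i.+1 < N)%N.
- ring.
- have -> : F b N = F b i.+1 by congr F; lia.
  have -> : F b N.+1 = F b i.+2 by congr F; lia.
  ring.
- have e0 : (i : nat) = 0%N by lia.
  by rewrite e0; ring.
- have e0 : (i : nat) = 0%N by lia.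
  have -> : F b N = F b i.+1 by congr F; lia.
  have -> : F b N.+1 = F b i.+2 by congr F; lia.
  by rewrite e0; ring.
Qed.

(* The Lyapunov function x (N + 1 - x): it vanishes at the absorbing states
   and, being a concave parabola, decreases in expectation at every step. *)
Definition parabola (x : nat) : R := x%:R * (N.+1%:R - x%:R).
Definition lyap : state N -> R := lift (fun _ => parabola) (fun _ => 0) (fun _ => 0).

Lemma lyap_ge0 (u : state N) : 0 <= lyap u.
Proof.
case: u => [[i b]|[[] b]] //=; rewrite /parabola.
by apply: mulr_ge0 => //; rewrite subr_ge0 ler_nat ltnS ltnW.
Qed.

Hypothesis eps_le1 : eps <= 1.

(* The parabola drops by 2 lrate b >= 2 eps per unit of total rate Z, and
   Z <= 2 + gamma. *)
Lemma lyap_drift (s : state N) : ~~ absorbing s ->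
  \sum_u jump eps gamma s u * lyap u <= lyap s - eps / (2 + gamma).
Proof.
case: s => [[i b]|p] // _.
rewrite jump_average /lyap rate_lift ler_pdivrMr ?rate_total_gt0 // rate_total /=.
have lrate_ge : eps <= lrate b by case: (b).
have lrate_le1 : lrate b <= 1 by case: (b).
have lrate_pos := lrate_gt0 b.
set Z := _ + _ + gamma.
have Z_le : Z <= 2 + gamma.
  by rewrite /Z; case: ifP => _; case: ifP => _; move: lrate_le1; lra.
have cZ_le : eps / (2 + gamma) * Z <= eps.
  rewrite mulrAC ler_pdivrMr; last (move: gamma_gt0; lra).
  by apply: ler_wpM2l; [apply: ltW|].
suff drift : (if (0 < i)%N then lrate b * parabola i else 0) +
  (if (i.+1 < N)%N then lrate b * parabola i.+2 else 0) +
  gamma * parabola i.+1 <= parabola i.+1 * Z - 2 * lrate b.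
  rewrite mulrBl; apply: (le_trans drift); rewrite lerD2l lerN2.
  apply: (le_trans cZ_le); lra.
rewrite /Z /parabola.
have hi := ltn_ord i.
have lrate_co : 0 <= 1 - lrate b by lra.
have [h0|h0] := boolP (0 < i)%N; have [h1|h1] := boolP (i.+1 < N)%N.
- rewrite ?mulrS ?natr1 ?natrD; lra.
- have -> : N.+1%:R = i.+2%:R :> R by congr (_%:R); lia.
  have := mulr_ge0 lrate_co (ler0n R i.+1).
  rewrite ?mulrS ?natr1 ?natrD; lra.
- have e0 : (i : nat) = 0%N by lia.
  have := mulr_ge0 lrate_co (ler0n R N).
  rewrite e0 ?mulrS ?natr1 ?natrD; lra.
- have e0 : (i : nat) = 0%N by lia.
  have -> : N.+1%:R = 2%:R :> R by congr (_%:R); lia.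
  rewrite e0 ?mulrS ?natr1 ?natrD; lra.
Qed.

Lemma stepn_iterP (n : nat) (s t : state N) :
  stepn eps gamma n s t = iterP (jump eps gamma) n s t.
Proof. by elim: n s => [|n IH] s //=; under eq_bigr do rewrite IH. Qed.

Lemma harmonic_absorbed (f : state N -> R) (s : state N) :
  harmonic_fun (jump eps gamma) f ->
  f s = limn (fun n => \sum_(u | absorbing u) stepn eps gamma n s u * f u).
Proof.
move=> hf; apply/esym/cvg_lim => //.
under eq_fun do under eq_bigr do rewrite stepn_iterP.
apply: (absorbed_expect_cvg jump_ge0 jump_absorbing jump_sum1 lyap_ge0 _ lyap_drift hf).
by apply: divr_gt0 => //; move: gamma_gt0; lra.
Qed.

End Chain.

Section Roots.
Variables (R : realType) (eps gamma : R).
Hypotheses (eps_gt0 : 0 < eps) (gamma_gt0 : 0 < gamma).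

Local Notation ab := (alpha_b eps gamma).
Local Notation a1 := (alpha1 eps gamma).
Local Notation a2 := (alpha2 eps gamma).

(* the characteristic polynomial of the interior recurrence *)
Definition charpoly (a : R) : R := eps * a ^+ 2 - (gamma * (1 + eps) + 2 * eps) * a + eps.

Lemma alpha_b_gt1 : 1 < ab.
Proof.
rewrite ltrDl; apply: mulr_gt0; first by apply: divr_gt0.
by apply: addr_gt0 => //; rewrite invr_gt0.
Qed.

Lemma disc_gt0 : 0 < ab ^+ 2 - 1.
Proof.
have ab_gt1 := alpha_b_gt1.
by rewrite subr_gt0 expr_gt1 // ltW // (lt_trans ltr01 ab_gt1).
Qed.

Lemma sqrt_disc_sqr : Num.sqrt (ab ^+ 2 - 1) ^+ 2 = ab ^+ 2 - 1.
Proof. by rewrite sqr_sqrtr // ltW // disc_gt0. Qed.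

(* completing the square: the roots are ab -+ sqrt (ab^2 - 1) *)
Lemma charpolyE (a : R) : charpoly a = eps * ((a - ab) ^+ 2 - (ab ^+ 2 - 1)).
Proof.
rewrite /charpoly; have -> : gamma * (1 + eps) + 2 * eps = eps * 2 * ab.
  by rewrite /alpha_b; field; exact: lt0r_neq0.
ring.
Qed.

Lemma charpoly_alpha1 : charpoly a1 = 0.
Proof.
rewrite charpolyE /alpha1; have := sqrt_disc_sqr.
by set sq := Num.sqrt _ => hsq; rewrite -hsq; ring.
Qed.

Lemma charpoly_alpha2 : charpoly a2 = 0.
Proof.
rewrite charpolyE /alpha2; have := sqrt_disc_sqr.
by set sq := Num.sqrt _ => hsq; rewrite -hsq; ring.
Qed.

Lemma alpha1_mul_alpha2 : a1 * a2 = 1.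
Proof.
rewrite /alpha1 /alpha2; have := sqrt_disc_sqr.
set sq := Num.sqrt _ => hsq.
by transitivity (ab ^+ 2 - sq ^+ 2); [ring | rewrite hsq; ring].
Qed.

Lemma alpha2_gt0 : 0 < a2.
Proof. by apply: addr_gt0; [apply: lt_trans alpha_b_gt1 | rewrite sqrtr_gt0 disc_gt0]. Qed.

Lemma alpha1_gt0 : 0 < a1.
Proof. by have := alpha1_mul_alpha2; rewrite -(pmulr_lgt0 _ alpha2_gt0) => ->. Qed.

Lemma alpha1_lt_alpha2 : a1 < a2.
Proof.
have : 0 < Num.sqrt (ab ^+ 2 - 1) by rewrite sqrtr_gt0 disc_gt0.
by rewrite /alpha1 /alpha2; lra.
Qed.

End Roots.

Definition profile (R : realType) (eps gamma : R) (c : 'I_4 -> R) (b : bool) (x : nat) : R :=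
  c 0 * x%:R + c 1 + (if b then -1 else eps) *
     (c 2 * alpha1 eps gamma ^+ x + c 3 * alpha2 eps gamma ^+ x).

(* Every profile solves the interior recurrence: the affine part trivially,
   the exponential parts because a1 and a2 are roots of [charpoly]. *)
Lemma profile_interior (R : realType) (eps gamma : R) (c : 'I_4 -> R) :
  0 < eps -> 0 < gamma -> interior_eq eps gamma (profile eps gamma c).
Proof.
move=> eps_gt0 gamma_gt0 b y; apply/eqP; rewrite -subr_eq0; apply/eqP.
transitivity ((if b then -1 else 1) *
   (c 2 * alpha1 eps gamma ^+ y * charpoly eps gamma (alpha1 eps gamma) +
    c 3 * alpha2 eps gamma ^+ y * charpoly eps gamma (alpha2 eps gamma))).
  by case: b; rewrite /profile /lrate /charpoly /= !exprS ?mulrS; ring.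
by rewrite charpoly_alpha1 // charpoly_alpha2 // !mulr0 addr0 mulr0.
Qed.

Definition candidate (R : realType) (N : nat) (eps gamma : R) (c : 'I_4 -> R) :
  state N -> R :=
  let F := profile eps gamma c in lift (N:=N) F (bvalL eps F) (bvalR N eps F).

Lemma candidate_harmonic (R : realType) (N : nat) (eps gamma : R) (c : 'I_4 -> R) :
  0 < eps -> 0 < gamma -> harmonic_fun (jump eps gamma) (candidate (N:=N) eps gamma c).
Proof. by move=> eps_gt0 gamma_gt0; apply/lift_harmonic/profile_interior. Qed.

Lemma sum_ord4 (R : pzRingType) (G : 'I_4 -> R) : \sum_(k < 4) G k = G 0 + G 1 + G 2 + G 3.
Proof.
rewrite !big_ord_recl big_ord0 addr0 !addrA /=.
by congr (_ + _ + _ + _); congr G; apply: val_inj.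
Qed.

Lemma Meps_row (R : realType) (N : nat) (eps gamma : R) (c : 'I_4 -> R) (r : 'I_4) :
  \sum_k Meps N eps gamma r k * c k = candidate eps gamma c (target N r).
Proof.
rewrite sum_ord4 !mxE.
case: r => [[|[|[|[|r]]]] hr] //=;
by rewrite /candidate /profile /bvalL /bvalR /lrate /= ?expr0 ?exprS ?mulrS; ring.
Qed.

Lemma absorbing_target (N : nat) (u : state N) : absorbing u -> exists r, u = target N r.
Proof.
case: u => [[i b]|[side b]] // _.
by exists (if side then (if b then 3 else 2) else (if b then 1 else 0)); case: side; case: b.
Qed.

Lemma target_absorbing (N : nat) (j : 'I_4) : absorbing (target N j).
Proof. by case: j => [[|[|[|[|j]]]] hj]. Qed.

Lemma target_inj (N : nat) (r j : 'I_4) : (target N r == target N j) = (r == j).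
Proof. by case: r => [[|[|[|[|r]]]] hr]; case: j => [[|[|[|[|j]]]] hj]. Qed.

Lemma candidate_boundary_zero (R : realType) (N : nat) (eps gamma : R) (c : 'I_4 -> R) :
  0 < eps -> eps <= 1 -> 0 < gamma ->
  (forall r, candidate eps gamma c (target N r) = 0) ->
  forall s : state N, candidate eps gamma c s = 0.
Proof.
move=> eps_gt0 eps_le1 gamma_gt0 hbd s.
have hf := candidate_harmonic (N:=N) c eps_gt0 gamma_gt0.
rewrite (harmonic_absorbed eps_gt0 gamma_gt0 eps_le1 s hf).
transitivity (limn (fun _ : nat => 0 : R)); last exact: lim_cst.
congr (limn _); apply: funext => n.
by rewrite big1 // => u /absorbing_target [r ->]; rewrite hbd mulr0.
Qed.

Lemma profile_vanish (R : realType) (eps gamma : R) (c : 'I_4 -> R) :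
  0 < eps -> 0 < gamma ->
  (forall b, profile eps gamma c b 1 = 0 /\ profile eps gamma c b 2 = 0) ->
  forall k, c k = 0.
Proof.
move=> eps_gt0 gamma_gt0 hF.
have [[A0 B0] [A1 B1]] := (hF false, hF true); move: A0 B0 A1 B1.
rewrite /profile /= !expr1.
have a1_gt0 := alpha1_gt0 eps_gt0 gamma_gt0; have a2_gt0 := alpha2_gt0 eps_gt0 gamma_gt0.
have a12 := alpha1_lt_alpha2 eps_gt0 gamma_gt0.
set a1 := alpha1 eps gamma in a1_gt0 a12 *; set a2 := alpha2 eps gamma in a2_gt0 a12 *.
move=> A0 B0 A1 B1.
(* subtracting the two levels isolates the exponential part at x = 1, 2 *)
have e1 : c 2 * a1 + c 3 * a2 = 0.
  apply: (mulfI (_ : 1 + eps != 0)); first by rewrite gt_eqF //; lra.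
  by rewrite mulr0; lra.
have e2 : c 2 * a1 ^+ 2 + c 3 * a2 ^+ 2 = 0.
  apply: (mulfI (_ : 1 + eps != 0)); first by rewrite gt_eqF //; lra.
  by rewrite mulr0; lra.
have c3z : c 3 = 0.
  apply: (mulIf (_ : a2 * (a1 - a2) != 0)); first by rewrite mulf_neq0 ?(gt_eqF a2_gt0) // subr_eq0 (lt_eqF a12).
  by rewrite mul0r; transitivity (a1 * (c 2 * a1 + c 3 * a2) - (c 2 * a1 ^+ 2 + c 3 * a2 ^+ 2));
    [ring | rewrite e1 e2; ring].
have c2z : c 2 = 0.
  by apply: (mulIf (lt0r_neq0 a1_gt0)); rewrite mul0r; move: e1; rewrite c3z mul0r addr0.
have c0z : c 0 = 0 by move: A0 B0; rewrite c2z c3z; lra.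
have c1z : c 1 = 0 by move: A0; rewrite c0z c2z c3z; lra.
case=> [[|[|[|[|k]]]] hk] //;
  [rewrite -c0z | rewrite -c1z | rewrite -c2z | rewrite -c3z]; congr c; exact: val_inj.
Qed.

(* Invertibility: a kernel vector of M_eps gives a candidate with zero boundary
   values, hence identically zero, whose profile then forces the vector to 0. *)
Lemma Meps_unit (R : realType) (eps gamma : R) (N : nat) :
  0 < eps -> eps <= 1 -> 0 < gamma -> (2 <= N)%N -> Meps N eps gamma \in unitmx.
Proof.
move=> eps_gt0 eps_le1 gamma_gt0 hN.
rewrite unitmxE unitfE -det_tr; apply/negP => /det0P [v v_neq0 v_ker].
pose c k := v 0 k.
have hbd r : candidate eps gamma c (target N r) = 0.
  have hr := congr1 (fun A : 'rV[R]_4 => A 0 r) v_ker.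
  rewrite /= [in LHS]mxE [in RHS]mxE in hr.
  rewrite -Meps_row -[RHS]hr; apply: eq_bigr => k _.
  by rewrite [(_^T) _ _]mxE mulrC.
have hzero := candidate_boundary_zero eps_gt0 eps_le1 gamma_gt0 hbd.
have N_gt0 : (0 < N)%N by apply: ltn_trans hN.
have hc := profile_vanish eps_gt0 gamma_gt0 (fun b =>
  conj (hzero (Vst (Ordinal N_gt0) b)) (hzero (Vst (Ordinal hN) b))).
by move/negP: v_neq0; apply; apply/eqP/rowP => k; rewrite mxE; exact: hc.
Qed.

Lemma cvecE (R : realType) (N : nat) (eps gamma : R) (k j : 'I_4) :
  cvec N eps gamma k j 0 = invmx (Meps N eps gamma) k j.
Proof.
rewrite /cvec !mxE (bigD1 k) //= !mxE !eqxx mulr1 big1 ?addr0 // => l hl.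
by rewrite !mxE (negbTE hl) mulr0.
Qed.

Theorem mainTheorem6 (R : realType) (eps gamma : R) (N : nat)
  (heps0 : 0 < eps) (heps1 : eps <= 1) (hgamma : 0 < gamma) (hN : (2 <= N)%N) :
  Meps N eps gamma \in unitmx /\
  forall (i : 'I_N) (j : 'I_4),
    let x := i.+1 in
    let c := fun k : 'I_4 => cvec N eps gamma k j 0 in
    let a1 := alpha1 eps gamma in
    let a2 := alpha2 eps gamma in
    phat eps gamma (Vst i false) (target N j)
      = c 0 * x%:R + c 1 + eps * (c 2 * a1 ^+ x + c 3 * a2 ^+ x) /\
    phat eps gamma (Vst i true) (target N j)
      = c 0 * x%:R + c 1 - (c 2 * a1 ^+ x + c 3 * a2 ^+ x).
Proof.
have M_unit := Meps_unit heps0 heps1 hgamma hN.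
split => // i j x c a1 a2.
(* the candidate built from the j-th column of M^-1 has boundary values
   delta_{. j}, hence is the absorption probability at target j *)
pose col k := invmx (Meps N eps gamma) k j.
have hbd (u : state N) : absorbing u -> candidate eps gamma col u = (u == target N j)%:R.
  move=> /absorbing_target [r ->]; rewrite target_inj -Meps_row.
  by have /matrixP/(_ r j) := mulmxV M_unit; rewrite !mxE.
have hphat (s : state N) : phat eps gamma s (target N j) = candidate eps gamma col s.
  rewrite (harmonic_absorbed heps0 hgamma heps1 s (candidate_harmonic col heps0 hgamma)).
  rewrite /phat; congr (limn _).
  apply: funext => n; rewrite (bigD1 (target N j)) ?target_absorbing //= hbd ?target_absorbing //.
  rewrite eqxx mulr1 big1 ?addr0 // => u /andP[hu hne].
  by rewrite hbd // (negbTE hne) mulr0.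
by rewrite !hphat /candidate /profile /= /c /col /x /a1 /a2 !cvecE; split; ring.
Qed.
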